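(* In the setting of the cascaded network $\mathrm{GradNetC}$ (defined by $\boldsymbol{z}_0=\boldsymbol{\beta}_0\odot\boldsymbol{W}\boldsymbol{x}+\boldsymbol{b}_0$, $\boldsymbol{z}_\ell=\boldsymbol{\beta}_\ell\odot\boldsymbol{W}\boldsymbol{x}+\boldsymbol{\alpha}_\ell\odot\sigma_\ell(\boldsymbol{z}_{\ell-1})+\boldsymbol{b}_\ell$ for $1\le\ell\le L-1$, and $\mathrm{GradNetC}(\boldsymbol{x})=\boldsymbol{W}^\top[\boldsymbol{\alpha}_L\odot\sigma_L(\boldsymbol{z}_{L-1})]+\boldsymbol{b}_L$, with $\boldsymbol{W}\in\mathbb{R}^{n\times d}$, $\boldsymbol{\alpha}_\ell,\boldsymbol{\beta}_\ell,\boldsymbol{b}_\ell\in\mathbb{R}^n$, $\boldsymbol{b}_L\in\mathbb{R}^d$), suppose that all $\boldsymbol{\alpha}_\ell$ ($1\le\ell\le L$) and $\boldsymbol{\beta}_\ell$ ($0\le\ell\le L-1$) have nonnegative entries and each $\sigma_\ell$ is a differentiable, monotonically increasing elementwise activation. Then $\mathrm{GradNetC}$ is the gradient of a convex continuously differentiable function on $\mathbb{R}^d$, i.e. an mGradNet.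
   Context: $\odot$ is the entrywise product. An elementwise activation $\sigma:\mathbb{R}^n\to\mathbb{R}^n$ has the form $\sigma(\boldsymbol{z})=(s_1(z_1),\dots,s_n(z_n))$; it is monotonically increasing if each $s_j$ is. An mGradNet is a function $f:\mathbb{R}^d\to\mathbb{R}^d$ with $f=\nabla F$ for some convex continuously differentiable $F:\mathbb{R}^d\to\mathbb{R}$. *)

From HB Require Import structures.
From mathcomp Require Import all_boot all_order all_algebra.
From mathcomp Require Import all_classical all_reals all_analysis.
Set Implicit Arguments. Unset Strict Implicit. Unset Printing Implicit Defensive.
Import Order.TTheory GRing.Theory Num.Theory.
Import numFieldNormedType.Exports.
Local Open Scope ring_scope.

(* Vectors of R^k are row vectors 'rV[R]_k; W x is written x *m W^T and
   W^T v is written v *m W. *)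

Definition hprod (R : realType) (n : nat) (a b : 'rV[R]_n) : 'rV[R]_n :=
  \row_j (a 0 j * b 0 j).

Definition elementwise (R : realType) (n : nat) (s : 'I_n -> R -> R)
  (z : 'rV[R]_n) : 'rV[R]_n := \row_j s j (z 0 j).

Definition mono_diff_activation (R : realType) (n : nat) (s : 'I_n -> R -> R) :=
  forall j : 'I_n, (forall u v : R, u <= v -> s j u <= s j v) /\
                   (forall u : R, derivable (s j) u 1).

Fixpoint gradnetC_z (R : realType) (d n : nat) (W : 'M[R]_(n, d))
  (alpha beta b : nat -> 'rV[R]_n) (sigma : nat -> 'I_n -> R -> R)
  (l : nat) (x : 'rV[R]_d) : 'rV[R]_n :=
  match l with
  | 0 => hprod (beta 0%N) (x *m W^T) + b 0%N
  | l'.+1 => hprod (beta l) (x *m W^T)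
             + hprod (alpha l) (elementwise (sigma l)
                          (gradnetC_z W alpha beta b sigma l' x))
             + b l
  end.

Definition gradnetC (R : realType) (d n L : nat) (W : 'M[R]_(n, d))
  (alpha beta b : nat -> 'rV[R]_n) (sigma : nat -> 'I_n -> R -> R)
  (bL : 'rV[R]_d) (x : 'rV[R]_d) : 'rV[R]_d :=
  hprod (alpha L) (elementwise (sigma L) (gradnetC_z W alpha beta b sigma L.-1 x))
    *m W + bL.

Definition convex_fun (R : realType) (d : nat) (F : 'rV[R]_d -> R) :=
  forall (x y : 'rV[R]_d) (t : R), 0 <= t <= 1 ->
    F (t *: x + (1 - t) *: y) <= t * F x + (1 - t) * F y.

(* f = grad F: F is (Frechet) differentiable at every point, its differential
   at x is v |-> <f x, v>; together with continuity of f = grad F this is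
   exactly "F is continuously differentiable with gradient f". *)
Definition is_C1_gradient (R : realType) (d : nat) (F : 'rV[R]_d -> R)
  (f : 'rV[R]_d -> 'rV[R]_d) :=
  (forall x : 'rV[R]_d, differentiable F x /\
     forall v : 'rV[R]_d, 'd F x v = (f x *m v^T) 0 0) /\
  continuous f.

Definition mGradNet (R : realType) (d : nat) (f : 'rV[R]_d -> 'rV[R]_d) :=
  exists F : 'rV[R]_d -> R, convex_fun F /\ is_C1_gradient F f.

From HB Require Import structures.
From mathcomp Require Import all_boot all_order all_algebra.
From mathcomp Require Import all_classical all_reals all_analysis.
From mathcomp Require Import lra ring.
Import Order.TTheory GRing.Theory Num.Theory.
Import numFieldNormedType.Exports.
Local Open Scope classical_set_scope.
Local Open Scope ring_scope.

Set Implicit Arguments. Unset Strict Implicit. Unset Printing Implicit Defensive.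

(* Every hidden unit j sees x only through (W x)_j: coordinate j of z_l is
   h_{l,j}((W x)_j) for a scalar recursion h_{l,j}, which is continuous and
   nondecreasing because alpha, beta >= 0 and every sigma_l is continuous and
   nondecreasing.  Hence GradNetC(x) = W^T g(W x) + b_L with
   g_j = alpha_{L,j} sigma_{L,j} o h_{L-1,j} continuous and nondecreasing.  Such
   a map is the gradient of F(x) = sum_j G_j((W x)_j) + <b_L, x>, where G_j is a
   primitive of g_j; G_j lies above its tangents by the mean value theorem, so it
   is convex, and so is F. *)

Section convex_real.
Context {R : realType}.

Definition convex_real (G : R -> R) :=
  forall a c t : R, 0 <= t <= 1 ->
    G (t * a + (1 - t) * c) <= t * G a + (1 - t) * G c.

Section nondecreasing_derivative.
Variables (G g : R -> R).
Hypothesis G'g : forall x, is_derive x (1:R) G (g x).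
Hypothesis g_nondecr : {homo g : u v / u <= v}.

Lemma tangent_le_of_nondecreasing_derive z x : G z + g z * (x - z) <= G x.
Proof.
have G_cont a b : {within `[a, b], continuous G}.
  apply: derivable_within_continuous => t _.
  exact: (@ex_derive _ _ _ _ _ _ _ (G'g t)).
have [zx|xz] := leP z x.
- have [c /[!in_itv] /= /andP[zc cx] E] :=
    MVT_segment zx (fun t _ => G'g t) (G_cont z x).
  have : g z * (x - z) <= g c * (x - z).
    by apply: ler_wpM2r; [rewrite subr_ge0 | exact: g_nondecr].
  lra.
- have [c /[!in_itv] /= /andP[xc cz] E] :=
    MVT_segment (ltW xz) (fun t _ => G'g t) (G_cont x z).
  have : g c * (z - x) <= g z * (z - x).
    by apply: ler_wpM2r; [rewrite subr_ge0 ltW | exact: g_nondecr].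
  lra.
Qed.

Lemma convex_real_of_nondecreasing_derive : convex_real G.
Proof.
move=> a c t /andP[t0 t1]; set z := t * a + (1 - t) * c.
have E : t * (G z + g z * (a - z)) + (1 - t) * (G z + g z * (c - z)) = G z.
  by rewrite /z; ring.
rewrite -[X in X <= _]E; apply: lerD; apply: ler_wpM2l;
  rewrite ?subr_ge0 //; exact: tangent_le_of_nondecreasing_derive.
Qed.

End nondecreasing_derivative.
End convex_real.

Section antiderivative.
Context {R : realType}.
Notation mu := (@lebesgue_measure R).
Notation integral a y g := (parameterized_integral mu a y g).

(* The base point only has to lie below [y] and [0]: the value does not depend
   on it, see [antiderivativeE]. *)
Definition antiderivative (g : R -> R) (y : R) : R :=
  let a := Num.min y 0 - 1 in integral a y g - integral a 0 g.

Variable g : R -> R.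
Hypothesis g_cont : continuous g.

Let g_integrable a y : mu.-integrable `[a, y] (EFin \o g).
Proof.
apply: continuous_compact_integrable; first exact: segment_compact.
exact: continuous_subspaceT.
Qed.

Lemma parameterized_integral_split a a' y : a <= a' -> a' <= y ->
  integral a y g = integral a a' g + integral a' y g.
Proof.
move=> aa' a'y.
have := @Rintegral_itvB R g (BLeft a) (BRight y) a' (g_integrable a y).
rewrite !bnd_simp => /(_ aa' a'y) E.
rewrite /parameterized_integral -(@Rintegral_itv_obnd_cbnd _ a' (BRight y)).
  by rewrite -E addrC subrK.
apply: integrableS (g_integrable a y) => //.
by apply: subset_itvr; rewrite bnd_simp.
Qed.

Let integral_shift a a' y : a <= a' -> a' <= Num.min y 0 ->
  integral a y g - integral a 0 g = integral a' y g - integral a' 0 g.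
Proof.
move=> aa' a'm.
have a'y : a' <= y by rewrite (le_trans a'm) // ge_min lexx.
have a'0 : a' <= 0 by rewrite (le_trans a'm) // ge_min lexx orbT.
rewrite (parameterized_integral_split aa' a'y).
rewrite (parameterized_integral_split aa' a'0).
by rewrite opprD addrACA subrr add0r.
Qed.

Lemma antiderivativeE a y : a <= Num.min y 0 ->
  antiderivative g y = integral a y g - integral a 0 g.
Proof.
move=> am; rewrite /antiderivative.
have a'm : Num.min y 0 - 1 <= Num.min y 0 by rewrite lerBlDr lerDl.
have [aa'|a'a] := leP a (Num.min y 0 - 1).
  by rewrite (integral_shift aa' a'm).
by rewrite (integral_shift (ltW a'a) am).
Qed.

Lemma is_derive_antiderivative x : is_derive x (1:R) (antiderivative g) (g x).
Proof.
(* [a] stays below [Num.min y 0] for all [y] within distance 1 of [x]. *)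
set a := Num.min x 0 - 2.
have ax : a < x.
  have : Num.min x 0 <= x by rewrite ge_min lexx.
  rewrite /a; lra.
have d_integral : is_derive x (1:R) (fun y => integral a y g) (g x).
  have xx1 : x < x + 1 by rewrite ltrDl.
  have [dF F'x] :=
    @continuous_FTC1_closed R g a x (x + 1) xx1 (g_integrable _ _) ax (@g_cont x).
  by apply: DeriveDef dF _; rewrite -derive1E.
have := is_deriveB d_integral (is_derive_cst (integral a 0 g) x 1).
rewrite subr0; apply: near_eq_is_derive.
near=> y; rewrite (@antiderivativeE a) // /a.
have : ball x 1 y by near: y; apply: (@near_ball _ _ x 1).
rewrite /ball /= => /ltr_distlDr xy.
have [x0|x0] := leP x 0; have [y0|y0] := leP y 0;
  rewrite ?(min_l x0) ?(min_l y0) ?(min_r (ltW x0)) ?(min_r (ltW y0)); lra.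
Unshelve. all: by end_near. Qed.
End antiderivative.

Section sums.
Context {R : realType}.

Lemma continuous_sum (T : topologicalType) (V : normedModType R) n
    (f : 'I_n -> T -> V) :
  (forall i, continuous (f i)) -> continuous (\sum_(i < n) f i).
Proof.
move=> fc x; elim/big_ind : _ => //; first exact: cst_continuous.
by move=> f1 f2 c1 c2; apply: continuousD.
Qed.

Lemma diff_sum (V W : normedModType R) n (f : 'I_n -> V -> W) (x v : V) :
  (forall i, differentiable (f i) x) ->
  'd (\sum_(i < n) f i) x v = \sum_(i < n) 'd (f i) x v.
Proof.
elim: n f => [|n IH] f df; first by rewrite !big_ord0 diff_cst.
rewrite big_ord_recr diffD /=; last 2 first.
- exact: differentiable_sum.
- exact: df.
by rewrite IH // big_ord_recr.
Qed.

End sums.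

Section mxcoord.
Context {R : realType} (m k : nat) (M : 'M[R]_(m, k)) (j : 'I_k).

Definition mxcoord (x : 'rV[R]_m) : R := (x *m M) 0 j.

Lemma mxcoord_is_linear : linear mxcoord.
Proof. by move=> a u v; rewrite /mxcoord mulmxDl -scalemxAl !mxE. Qed.

Lemma mxcoord_conv (t : R) (x y : 'rV[R]_m) :
  mxcoord (t *: x + (1 - t) *: y) = t * mxcoord x + (1 - t) * mxcoord y.
Proof. by rewrite /mxcoord mulmxDl -!scalemxAl !mxE. Qed.

Lemma differentiable_mxcoord x : differentiable mxcoord x.
Proof.
have -> : mxcoord = \sum_(i < m) (fun y : 'rV[R]_m => y 0 i *: M i j).
  by apply/funext => y; rewrite fct_sumE /mxcoord mxE.
by apply: differentiable_sum => i; apply/differentiableZl/differentiable_coord.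
Qed.

Lemma continuous_mxcoord : continuous mxcoord.
Proof. by move=> x; apply/differentiable_continuous/differentiable_mxcoord. Qed.

Lemma diff_mxcoord x : 'd mxcoord x = mxcoord :> ('rV[R]_m -> R).
Proof.
pose L : {linear 'rV[R]_m -> R} :=
  HB.pack mxcoord (GRing.isLinear.Build _ _ _ _ _ mxcoord_is_linear).
exact: (@diff_lin _ _ _ L x continuous_mxcoord).
Qed.

Lemma diff_comp_mxcoord (G : R -> R) (dG : R) x v :
  is_derive (mxcoord x) (1:R) G dG -> 'd (G \o mxcoord) x v = mxcoord v * dG.
Proof.
move=> G'x; have dGx : differentiable G (mxcoord x).
  by apply/derivable1_diffP; exact: (@ex_derive _ _ _ _ _ _ _ G'x).
rewrite (diff_comp (differentiable_mxcoord x) dGx) /= diff_mxcoord.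
rewrite deriv1E; last exact: (@ex_derive _ _ _ _ _ _ _ G'x).
by rewrite derive1E (@derive_val _ _ _ _ _ _ _ G'x).
Qed.

End mxcoord.

Section convex_fun.
Context {R : realType} {d : nat}.

Lemma convex_funD (F1 F2 : 'rV[R]_d -> R) :
  convex_fun F1 -> convex_fun F2 -> convex_fun (F1 \+ F2).
Proof.
move=> cF1 cF2 x y t t01 /=.
by rewrite !mulrDr addrACA; apply: lerD; [exact: cF1 | exact: cF2].
Qed.

Lemma convex_fun_sum n (F : 'I_n -> 'rV[R]_d -> R) :
  (forall i, convex_fun (F i)) -> convex_fun (fun x => \sum_(i < n) F i x).
Proof.
move=> cF x y t t01; rewrite !mulr_sumr -big_split /=.
by apply: ler_sum => i _; exact: cF.
Qed.

Lemma convex_fun_comp_mxcoord k (M : 'M[R]_(d, k)) j (G : R -> R) :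
  convex_real G -> convex_fun (G \o mxcoord M j).
Proof. by move=> cG x y t t01 /=; rewrite mxcoord_conv; exact: cG. Qed.

End convex_fun.

Section ridge.
Context {R : realType} {d n : nat} (W : 'M[R]_(n, d)) (g : 'I_n -> R -> R)
  (c : 'rV[R]_d).

Definition ridge_map (x : 'rV[R]_d) : 'rV[R]_d :=
  \sum_(j < n) g j (mxcoord W^T j x) *: row j W + c.

Definition ridge_potential (x : 'rV[R]_d) : R :=
  \sum_(j < n) antiderivative (g j) (mxcoord W^T j x) + mxcoord c^T 0 x.

Hypothesis g_cont : forall j, continuous (g j).
Hypothesis g_nondecr : forall j, {homo g j : u v / u <= v}.

Lemma convex_ridge_potential : convex_fun ridge_potential.
Proof.
apply: convex_funD.
  apply: convex_fun_sum => j; apply: convex_fun_comp_mxcoord.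
  apply: convex_real_of_nondecreasing_derive (g_nondecr j).
  exact: is_derive_antiderivative.
by apply: (@convex_fun_comp_mxcoord _ _ _ _ _ id) => a a' t _; rewrite lexx.
Qed.

Lemma ridge_potential_gradient x :
  differentiable ridge_potential x /\
  forall v, 'd ridge_potential x v = (ridge_map x *m v^T) 0 0.
Proof.
have -> : ridge_potential =
    \sum_(j < n) (antiderivative (g j) \o mxcoord W^T j) + mxcoord c^T 0.
  by apply/funext => y; rewrite /ridge_potential fct_sumE.
have G'g j u : is_derive u (1:R) (antiderivative (g j)) (g j u).
  exact: is_derive_antiderivative.
have dG j : differentiable (antiderivative (g j) \o mxcoord W^T j) x.
  apply: differentiable_comp; first exact: differentiable_mxcoord.
  by apply/derivable1_diffP; exact: (@ex_derive _ _ _ _ _ _ _ (G'g j _)).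
have dsum := differentiable_sum dG.
split; first by apply: differentiableD => //; exact: differentiable_mxcoord.
move=> v; rewrite (diffD dsum (differentiable_mxcoord _ _ _)) /= diff_sum //.
rewrite diff_mxcoord /ridge_map mulmxDl mulmx_suml [RHS]mxE summxE.
congr (_ + _).
  apply: eq_bigr => j _; rewrite (diff_comp_mxcoord _ (G'g j _)).
  rewrite -scalemxAl mxE mulrC; congr (_ * _).
  by rewrite /mxcoord !mxE; apply: eq_bigr => i _; rewrite !mxE mulrC.
by rewrite /mxcoord !mxE; apply: eq_bigr => i _; rewrite !mxE mulrC.
Qed.

Lemma continuous_ridge_map : continuous ridge_map.
Proof.
have -> : ridge_map =
    \sum_(j < n) (fun x => g j (mxcoord W^T j x) *: row j W) + cst c.
  by apply/funext => x; rewrite /ridge_map fct_sumE.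
move=> x; apply: continuousD; last exact: cst_continuous.
apply: continuous_sum => j y; apply: continuousZr_tmp.
by apply: continuous_comp; [exact: continuous_mxcoord | exact: g_cont].
Qed.

Lemma mGradNet_ridge_map : mGradNet ridge_map.
Proof.
exists ridge_potential; split; first exact: convex_ridge_potential.
split; last exact: continuous_ridge_map.
exact: ridge_potential_gradient.
Qed.

End ridge.

Section gradnetC.
Context {R : realType} {d n : nat} (L : nat) (W : 'M[R]_(n, d))
  (alpha beta b : nat -> 'rV[R]_n) (sigma : nat -> 'I_n -> R -> R).

Fixpoint gradnetC_zj (j : 'I_n) (l : nat) (t : R) : R :=
  match l with
  | 0 => beta 0%N 0 j * t + b 0%N 0 j
  | l'.+1 =>
      beta l 0 j * t + alpha l 0 j * sigma l j (gradnetC_zj j l' t) + b l 0 j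
  end.

Definition gradnetC_out (j : 'I_n) (t : R) : R :=
  alpha L 0 j * sigma L j (gradnetC_zj j L.-1 t).

Lemma gradnetC_zE l x j :
  gradnetC_z W alpha beta b sigma l x 0 j = gradnetC_zj j l (mxcoord W^T j x).
Proof. by elim: l => [|l IH] /=; rewrite !mxE ?IH /mxcoord ?mxE. Qed.

Lemma gradnetCE bL :
  gradnetC L W alpha beta b sigma bL = ridge_map W gradnetC_out bL.
Proof.
apply/funext => x; rewrite /gradnetC mulmx_sum_row; congr (_ + _).
by apply: eq_bigr => j _; rewrite !mxE gradnetC_zE.
Qed.

Hypothesis alpha_ge0 :
  forall l : nat, (1 <= l <= L)%N -> forall j : 'I_n, 0 <= alpha l 0 j.
Hypothesis beta_ge0 :
  forall l : nat, (l <= L.-1)%N -> forall j : 'I_n, 0 <= beta l 0 j.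
Hypothesis sigma_mono_diff :
  forall l : nat, (1 <= l <= L)%N -> mono_diff_activation (sigma l).

Let sigma_cont l : (1 <= l <= L)%N -> forall j, continuous (sigma l j).
Proof.
move=> hl j u; apply/differentiable_continuous/derivable1_diffP.
exact: (sigma_mono_diff hl j).2.
Qed.

Let layer_index l : (l < L.-1)%N -> (1 <= l.+1 <= L)%N.
Proof. by move=> hl; rewrite /= (leq_trans hl) // leq_pred. Qed.

Lemma nondecreasing_gradnetC_zj j l :
  (l <= L.-1)%N -> {homo gradnetC_zj j l : u v / u <= v}.
Proof.
elim: l => [|l IH] hl u v uv /=; rewrite lerD2r.
  by rewrite ler_wpM2l // beta_ge0.
apply: lerD; first by rewrite ler_wpM2l // beta_ge0.
apply: ler_wpM2l; first exact: alpha_ge0 (layer_index hl) j.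
by apply: (sigma_mono_diff (layer_index hl) j).1; apply: IH => //; exact: ltnW.
Qed.

Lemma continuous_gradnetC_zj j l : (l <= L.-1)%N -> continuous (gradnetC_zj j l).
Proof.
elim: l => [|l IH] hl t /=.
  apply: cvgD; last exact: cvg_cst.
  by apply: cvgM; [exact: cvg_cst | exact: cvg_id].
apply: cvgD; last exact: cvg_cst.
apply: cvgD; apply: cvgM; try exact: cvg_cst; first exact: cvg_id.
apply: continuous_comp; first by apply: IH; exact: ltnW.
exact: sigma_cont (layer_index hl) j _.
Qed.

Hypothesis L_gt0 : (1 <= L)%N.

Let last_layer : (1 <= L <= L)%N.
Proof. by rewrite L_gt0 leqnn. Qed.

Lemma nondecreasing_gradnetC_out j : {homo gradnetC_out j : u v / u <= v}.
Proof.
move=> u v uv; apply: ler_wpM2l; first exact: alpha_ge0.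
by apply: (sigma_mono_diff last_layer j).1; exact: nondecreasing_gradnetC_zj.
Qed.

Lemma continuous_gradnetC_out j : continuous (gradnetC_out j).
Proof.
move=> t; apply: cvgM; first exact: cvg_cst.
apply: continuous_comp; first exact: continuous_gradnetC_zj.
exact: sigma_cont.
Qed.

End gradnetC.

Theorem corollary4 (R : realType) (d n L : nat) (W : 'M[R]_(n, d))
  (alpha beta b : nat -> 'rV[R]_n) (bL : 'rV[R]_d)
  (sigma : nat -> 'I_n -> R -> R) :
  (1 <= L)%N ->
  (forall l : nat, (1 <= l <= L)%N -> forall j : 'I_n, 0 <= alpha l 0 j) ->
  (forall l : nat, (l <= L.-1)%N -> forall j : 'I_n, 0 <= beta l 0 j) ->
  (forall l : nat, (1 <= l <= L)%N -> mono_diff_activation (sigma l)) ->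
  mGradNet (gradnetC L W alpha beta b sigma bL).
Proof.
move=> L_gt0 alpha_ge0 beta_ge0 sigma_mono_diff; rewrite gradnetCE.
apply: mGradNet_ridge_map => j.
- exact: continuous_gradnetC_out.
- exact: nondecreasing_gradnetC_out.
Qed.
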